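(* Let $(X,\to)$ be a finitely branching transition system over $A$. Then $\mathit{lo}_b$ is $c_b$-compatible, i.e. $\mathit{lo}_b(c_b(\mathcal S))\subseteq c_b(\mathit{lo}_b(\mathcal S))$ for all $\mathcal S\subseteq\mathcal P(X)$.
   Context: A transition system over $A$: $(X,\to)$, $\to\subseteq X\times A\times X$; finitely branching: $\{(a,x')\mid x\xrightarrow{a}x'\}$ finite for each $x$. $\Diamond_a(S)=\{x\mid\exists x'\in S\colon x\xrightarrow{a}x'\}$. $\mathit{lo}_b(\mathcal S)=\bigcup_{a\in A}\{\Diamond_a(S)\mid S\in\mathrm{cl}^{\cup,\lnot}_f(\mathcal S)\}$, where $\mathrm{cl}^{\cup,\lnot}_f(\mathcal S)$ is the closure of $\mathcal S$ under finite unions and complement. $\alpha_b(\mathcal S)=\{(x,x')\mid\forall S\in\mathcal S\colon(x\in S\iff x'\in S)\}$, $\gamma_b(R)=\{S\subseteq X\mid\forall(x,x')\in R\colon(x\in S\iff x'\in S)\}$ for equivalences $R$ on $X$, and $c_b=\gamma_b\circ\alpha_b$. *)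

From mathcomp Require Import all_boot.
From mathcomp Require Import boolp classical_sets cardinality.
Set Implicit Arguments. Unset Strict Implicit. Unset Printing Implicit Defensive.
Local Open Scope classical_set_scope.

(* A transition system over A on states X: trans x a x' means x -a-> x'. *)
Definition finitely_branching (A X : Type) (trans : X -> A -> X -> Prop) : Prop :=
  forall x : X, finite_set [set p : A * X | trans x p.1 p.2].

Definition diamond (A X : Type) (trans : X -> A -> X -> Prop) (a : A) (S : set X)
  : set X := [set x | exists2 x', S x' & trans x a x'].

(* cl^{u,not}_f(F): the least family containing F, closed under finite unions
   (empty union and binary unions) and complement. *)
Inductive cl_union_compl (X : Type) (F : set (set X)) : set (set X) :=
  | cl_base S : F S -> cl_union_compl F S
  | cl_empty : cl_union_compl F set0
  | cl_union S T : cl_union_compl F S -> cl_union_compl F T ->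
      cl_union_compl F (S `|` T)
  | cl_compl S : cl_union_compl F S -> cl_union_compl F (~` S).

Definition lo_b (A X : Type) (trans : X -> A -> X -> Prop) (F : set (set X))
  : set (set X) :=
  [set T | exists a : A, exists2 S, cl_union_compl F S & T = diamond trans a S].

Definition alpha_b (X : Type) (F : set (set X)) : X -> X -> Prop :=
  fun x x' => forall S, F S -> (S x <-> S x').

Definition gamma_b (X : Type) (R : X -> X -> Prop) : set (set X) :=
  [set S | forall x x', R x x' -> (S x <-> S x')].

Definition c_b (X : Type) (F : set (set X)) : set (set X) := gamma_b (alpha_b F).

From mathcomp Require Import all_boot.
From mathcomp Require Import boolp classical_sets cardinality.
Set Implicit Arguments. Unset Strict Implicit. Unset Printing Implicit Defensive.
Local Open Scope classical_set_scope.

(* Let [x -a-> y] with [y] in [S], and suppose [x] and [x'] agree on all sets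
   [Diamond_a U] with [U] in [cl(F)].  Since [S] is saturated for [alpha_b F],
   no a-successor [z] of [x'] lying outside [S] is [alpha_b F]-equivalent to
   [y], so some [U_z] in [cl(F)] contains [y] but not [z].  By finite branching
   the intersection [U] of the [U_z] is still in [cl(F)]; as [x] lies in
   [Diamond_a U], so does [x'], which forces an a-successor of [x'] into [S]. *)

Section ClosureUnionCompl.

Variable X : Type.

Lemma cl_union_compl_setT (F : set (set X)) : cl_union_compl F setT.
Proof. by rewrite -setC0; apply/cl_compl/cl_empty. Qed.

Lemma cl_union_compl_setI (F : set (set X)) U V :
  cl_union_compl F U -> cl_union_compl F V -> cl_union_compl F (U `&` V).
Proof.
move=> clU clV; rewrite -[U `&` V]setCK setCI.
by apply/cl_compl/cl_union; apply: cl_compl.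
Qed.

Lemma cl_union_compl_gamma_b (R : X -> X -> Prop) :
  cl_union_compl (gamma_b R) `<=` gamma_b R.
Proof.
move=> S; elim=> {S} [S //| | S T _ RS _ RT | S _ RS] x x' xRx' //=.
- by rewrite (propext (RS _ _ xRx')) (propext (RT _ _ xRx')).
- by rewrite (propext (RS _ _ xRx')).
Qed.

Lemma not_alpha_b_separate (F : set (set X)) y z : ~ alpha_b F y z ->
  exists U, [/\ cl_union_compl F U, U y & ~ U z].
Proof.
move=> /existsNP[S /not_implyP[FS SyNSz]].
have [Sy|NSy] := pselect (S y).
- by exists S; split=> [||Sz]; [exact: cl_base | | apply: SyNSz].
- exists (~` S); split=> [||NSz]; [exact/cl_compl/cl_base | by [] |].
  by apply: SyNSz; split=> [/NSy|/NSz].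
Qed.

Lemma cl_union_compl_separate_finite (F : set (set X)) y (Z : set X) :
  finite_set Z -> (forall z, Z z -> ~ alpha_b F y z) ->
  exists U, [/\ cl_union_compl F U, U y & forall z, Z z -> ~ U z].
Proof.
move=> /(@finite_seqP (classicType X))[s ->] {Z}.
elim: s => [|q s IHs] sep.
  by exists setT; split=> //; exact: cl_union_compl_setT.
have [|U [clU Uy NUs]] := IHs.
  by move=> z zs; apply: sep; rewrite /= in_cons zs orbT.
have [V [clV Vy NVq]] := not_alpha_b_separate (sep q (mem_head q s)).
exists (U `&` V); split; [exact: cl_union_compl_setI | by [] |].
move=> z /=; rewrite in_cons => /orP[/eqP-> [_ //] | zs [Uz _]].
exact: NUs zs Uz.
Qed.

End ClosureUnionCompl.

Lemma finitely_branching_successors (A X : Type) (trans : X -> A -> X -> Prop) :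
  finitely_branching trans -> forall x a, finite_set [set z | trans x a z].
Proof.
move=> fb x a; apply: sub_finite_set (finite_image snd (fb x)).
by move=> z xz; exists (a, z).
Qed.

Lemma diamond_c_b_transfer (A X : Type) (trans : X -> A -> X -> Prop)
    (F : set (set X)) (a : A) (S : set X) x x' :
  finite_set [set z | trans x' a z] ->
  (forall U, cl_union_compl F U -> diamond trans a U x -> diamond trans a U x') ->
  c_b F S -> diamond trans a S x -> diamond trans a S x'.
Proof.
move=> fin_succ transfer cbS [y Sy xy]; apply: contrapT => NSx'.
have sep z : trans x' a z -> ~ alpha_b F y z.
  by move=> x'z yz; apply: NSx'; exists z => //; exact: (cbS y z yz).1.
have [U [clU Uy NUsucc]] := cl_union_compl_separate_finite fin_succ sep.
have [z Uz x'z] := transfer U clU (ex_intro2 _ _ y Uy xy).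
exact: NUsucc z x'z Uz.
Qed.

Theorem mainTheorem9 (A X : Type) (trans : X -> A -> X -> Prop)
  (hfb : finitely_branching trans) (F : set (set X)) :
  lo_b trans (c_b F) `<=` c_b (lo_b trans F).
Proof.
move=> _ [a [S clS ->]] x x' xx'.
have cbS : c_b F S := cl_union_compl_gamma_b clS.
have lo U : cl_union_compl F U ->
    (diamond trans a U x <-> diamond trans a U x').
  by move=> clU; apply: xx'; exists a; exists U.
have fin := finitely_branching_successors hfb.
by split; apply: diamond_c_b_transfer cbS => // U /lo[].
Qed.
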